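(* An $L$-layer linear attention model with $H$ heads, dimension $d$ and precision $p$ cannot solve the permutation composition task $\mathsf{PerCom}$ on $[n]$ whenever $LHd(d+1)p<\log(n!)$ (note $\log(n!)=\Theta(n\log n)$). On the other hand, a single-layer full attention Transformer solves $\mathsf{PerCom}$ with $Hdp=O(\mathrm{poly}\log n)$. The same lower bound holds for linear attention with chain-of-thought.
   Context: Permutation composition $\mathsf{PerCom}(\sigma,\tau)$: the input consists of two bijections $\sigma,\tau:[n]\to[n]$, given as $n$ tokens $\sigma(1),\dots,\sigma(n)$ followed by $n$ tokens $\tau(1),\dots,\tau(n)$. The required output is the sequence $\sigma(\tau(1)),\dots,\sigma(\tau(n))$. Linear attention layer: head outputs $y_i=\sum_{j\le i}\alpha_{i,j}Vx_j$ with $\alpha_{i,j}=\varphi(Qx_i)^\top\varphi(Kx_j)/\sum_{j'\le i}\varphi(Qx_i)^\top\varphi(Kx_{j'})$ for an arbitrary $\varphi:\mathbb{R}^d\to\mathbb{R}^d$. Here $Q,K,V\in\mathbb{R}^{d\times dH}$ have $p$-bit entries, the $H$ heads are concatenated, and each layer is followed by an arbitrary position-wise MLP map. Full attention instead uses softmax weights $\alpha_{i,j}\propto\exp(\langle Qx_i,Kx_j\rangle)$. All quantities use $p$-bit precision. With chain-of-thought, the model autoregressively generates additional tokens after the input (each appended as a new position), and the answer is read from them. *)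

From HB Require Import structures.
From mathcomp Require Import all_boot all_order all_algebra all_fingroup.
From mathcomp Require Import reals sequences.
From mathcomp.analysis Require Import exp.
Set Implicit Arguments. Unset Strict Implicit. Unset Printing Implicit Defensive.
Import Order.TTheory GRing.Theory Num.Theory.
Local Open Scope ring_scope.

Section Defs.
Variable R : realType.

(* ---------- p-bit precision ----------------------------------------------
   p-bit signed fixed point, round-to-nearest with saturation:
   values k / 2^(p/2) with integer k, |k| <= 2^(p-1) - 1
   (at most 2^p representable values). *)
Definition rnd (p : nat) (x : R) : R :=
  let f := p./2 in
  let M : int := (2 ^ p.-1 - 1)%N%:Z in
  let k : int := Num.floor (x * 2 ^+ f + 2^-1) in
  let k' : int := Num.max (- M) (Num.min M k) in
  k'%:~R / 2 ^+ f.

Definition rndm (p : nat) (m k : nat) (A : 'M[R]_(m, k)) : 'M[R]_(m, k) :=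
  map_mx (rnd p) A.

Definition pbit_mx (p : nat) (m k : nat) (A : 'M[R]_(m, k)) : Prop :=
  forall i j, rnd p (A i j) = A i j.

(* ---------- attention heads ----------------------------------------------
   A head is evaluated at position i on the prefix xs = [x_0; ...; x_i]
   (causal); the current token is the last element of xs.  Row-vector
   convention: "Qx" is x *m Q.  Every intermediate scalar is rounded. *)

(* Linear attention head, in its (recurrent) form
     y_i = phi(q_i)^T S_i / phi(q_i)^T z_i,
     S_i = sum_{j<=i} phi(k_j) v_j^T,  z_i = sum_{j<=i} phi(k_j),
   the prefix sums being accumulated left to right with rounding. *)
Definition lin_head (p d : nat) (Q K V : 'M[R]_d)
    (phi : 'rV[R]_d -> 'rV[R]_d) (xs : seq 'rV[R]_d) : 'rV[R]_d :=
  let x := last 0 xs in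
  let fk (y : 'rV[R]_d) := rndm p (phi (rndm p (y *m K))) in
  let fv (y : 'rV[R]_d) := rndm p (y *m V) in
  let S := foldl (fun (S : 'M[R]_d) y => rndm p (S + (fk y)^T *m fv y)) 0 xs in
  let z := foldl (fun (z : 'rV[R]_d) y => rndm p (z + fk y)) 0 xs in
  let q := rndm p (phi (rndm p (x *m Q))) in
  let num := rndm p (q *m S) in
  let den := rnd p ((q *m z^T) ord0 ord0) in
  map_mx (fun a => rnd p (a / den)) num.

Definition soft_head (p d : nat) (Q K V : 'M[R]_d) (xs : seq 'rV[R]_d)
    : 'rV[R]_d :=
  let x := last 0 xs in
  let q := rndm p (x *m Q) in
  let e (y : 'rV[R]_d) :=
    rnd p (expR (rnd p ((q *m (rndm p (y *m K))^T) ord0 ord0))) in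
  let num := foldl (fun (a : 'rV[R]_d) y => rndm p (a + e y *: rndm p (y *m V))) 0 xs in
  let den := foldl (fun a y => rnd p (a + e y)) 0 xs in
  map_mx (fun a => rnd p (a / den)) num.

(* One layer: H heads (outputs concatenated, here given as a family indexed
   by 'I_H) followed by an arbitrary position-wise map, which also receives
   the layer input at that position (residual stream). *)
Definition apply_layer (p d H : nat)
    (head : 'I_H -> seq 'rV[R]_d -> 'rV[R]_d)
    (mlp : 'rV[R]_d -> ('I_H -> 'rV[R]_d) -> 'rV[R]_d)
    (xs : seq 'rV[R]_d) : seq 'rV[R]_d :=
  mkseq (fun i => rndm p (mlp (nth 0 xs i) (fun h => head h (take i.+1 xs))))
        (size xs).

Record lin_layer (d H : nat) := LinLayer {
  lQ : 'I_H -> 'M[R]_d;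
  lK : 'I_H -> 'M[R]_d;
  lV : 'I_H -> 'M[R]_d;
  lphi : 'I_H -> 'rV[R]_d -> 'rV[R]_d;
  lmlp : 'rV[R]_d -> ('I_H -> 'rV[R]_d) -> 'rV[R]_d }.

Record soft_layer (d H : nat) := SoftLayer {
  sQ : 'I_H -> 'M[R]_d;
  sK : 'I_H -> 'M[R]_d;
  sV : 'I_H -> 'M[R]_d;
  smlp : 'rV[R]_d -> ('I_H -> 'rV[R]_d) -> 'rV[R]_d }.

Definition lin_layer_pbit (p d H : nat) (l : lin_layer d H) : Prop :=
  forall h, [/\ pbit_mx p (lQ l h), pbit_mx p (lK l h) & pbit_mx p (lV l h)].

Definition soft_layer_pbit (p d H : nat) (l : soft_layer d H) : Prop :=
  forall h, [/\ pbit_mx p (sQ l h), pbit_mx p (sK l h) & pbit_mx p (sV l h)].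

Definition run_lin (p d H : nat) (layers : seq (lin_layer d H))
    (xs : seq 'rV[R]_d) : seq 'rV[R]_d :=
  foldl (fun xs l =>
    apply_layer p (fun h => lin_head p (lQ l h) (lK l h) (lV l h) (lphi l h))
                (lmlp l) xs) xs layers.

Definition run_soft (p d H : nat) (layers : seq (soft_layer d H))
    (xs : seq 'rV[R]_d) : seq 'rV[R]_d :=
  foldl (fun xs l =>
    apply_layer p (fun h => soft_head p (sQ l h) (sK l h) (sV l h))
                (smlp l) xs) xs layers.

Definition embed (p d : nat) (T : Type) (emb : nat -> T -> 'rV[R]_d)
    (toks : seq T) : seq 'rV[R]_d :=
  [seq rndm p (emb ij.1 ij.2) | ij <- zip (iota 0 (size toks)) toks].

End Defs.

(* input sequence sigma(1..n) tau(1..n) (0-indexed here) *)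
Definition percom_input (n : nat) (s t : {perm 'I_n}) : seq 'I_n :=
  [seq s i | i <- enum 'I_n] ++ [seq t i | i <- enum 'I_n].

(* Without chain of thought: the output token at position n+i (the position
   holding tau(i)) is read off the last layer by an arbitrary readout. *)
Definition lin_solves (R : realType) (p n d H : nat)
    (layers : seq (lin_layer R d H)) (emb : nat -> 'I_n -> 'rV[R]_d)
    (out : 'rV[R]_d -> 'I_n) : Prop :=
  forall (s t : {perm 'I_n}) (i : 'I_n),
    out (nth 0 (run_lin p layers (embed p emb (percom_input s t))) (n + i))
    = s (t i).

Definition soft_solves (R : realType) (p n d H : nat)
    (layers : seq (soft_layer R d H)) (emb : nat -> 'I_n -> 'rV[R]_d)
    (out : 'rV[R]_d -> 'I_n) : Prop :=
  forall (s t : {perm 'I_n}) (i : 'I_n),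
    out (nth 0 (run_soft p layers (embed p emb (percom_input s t))) (n + i))
    = s (t i).

(* Chain of thought: autoregressive greedy generation of T tokens over a
   finite vocabulary Voc; each new token is a function of the last-layer
   vector at the last position, and is appended as a new position. *)
Definition lin_cot (R : realType) (p d H : nat) (Voc : finType)
    (layers : seq (lin_layer R d H)) (emb : nat -> Voc -> 'rV[R]_d)
    (next : 'rV[R]_d -> Voc) (toks : seq Voc) (T : nat) : seq Voc :=
  drop (size toks)
    (iter T (fun ts => rcons ts (next (last 0 (run_lin p layers (embed p emb ts)))))
          toks).

Definition log2fact (R : realType) (n : nat) : R := ln (n`!%:R : R) / ln 2.

Definition all_lin_pbit (R : realType) (p d H : nat) (layers : seq (lin_layer R d H)) : Prop :=
  foldr (fun l P => lin_layer_pbit p l /\ P) True layers.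
Definition all_soft_pbit (R : realType) (p d H : nat) (layers : seq (soft_layer R d H)) : Prop :=
  foldr (fun l P => soft_layer_pbit p l /\ P) True layers.

From HB Require Import structures.
From mathcomp Require Import all_boot all_order all_algebra all_fingroup.
From mathcomp Require Import reals sequences.
From mathcomp.analysis Require Import exp.
From mathcomp Require Import zify ring lra.
From mathcomp Require boolp.
Set Implicit Arguments. Unset Strict Implicit. Unset Printing Implicit Defensive.
Import Order.TTheory GRing.Theory Num.Theory.
Local Open Scope ring_scope.

(* A linear attention head reads the prefix only through its running
   sums [S = sum_j phi(k_j) v_j^T] and [z = sum_j phi(k_j)]: [d (d + 1)] rounded
   numbers, each taking at most [2 ^ p] values. Feed [sigma] followed by the
   identity [tau]. Every later position, hence every answer and every
   chain-of-thought continuation, depends on [sigma] only through the [L * H]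
   pairs [(S, z)] left after the [sigma]-part. The answers recover [sigma], so
   [n! <= 2 ^ (L H d (d + 1) p)].

   One softmax head in dimension 4 can score the query [tau i] at
   position [n + i] against position [j < n] by [- beta (j - tau i)^2]. With
   [p = 2 f], [f = O(log n)] and [beta = f + 2], the rounded exponentials are
   exactly [1] at [j = tau i] and [0] elsewhere, so the head copies the value
   stored at position [tau i], which holds [sigma (tau i)]. *)

(** * Rounding to p bits *)

Section PbitValues.
Variables (R : realType) (p : nat).

Lemma pow2_gt0 : (0 < 2 ^ p)%N. Proof. by rewrite expn_gt0. Qed.

Definition pbit_max : int := (2 ^ p.-1 - 1)%N%:Z.

Definition pbit_val (j : 'I_(2 ^ p)) : R := ((j : nat)%:Z - pbit_max)%:~R / 2 ^+ p./2.

Lemma rnd_pbit_val (x : R) : exists j, pbit_val j = rnd p x.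
Proof.
rewrite /rnd /pbit_val -/pbit_max.
set k := Num.max _ _.
have /andP[k_ge k_le] : - pbit_max <= k <= pbit_max.
  by rewrite le_max ge_max ge_min !lexx /= ?orbT ?andbT /pbit_max; lia.
have j_lt : (absz (k + pbit_max)%R < 2 ^ p)%N.
  have two_pow : (2 * 2 ^ p.-1 <= (2 ^ p).+1)%N by case: p => [|q] //; rewrite expnS.
  rewrite -ltz_nat gez0_abs; have := pow2_gt0; move: k_ge k_le; rewrite /pbit_max; lia.
exists (Ordinal j_lt); rewrite /= gez0_abs; last by lia.
by rewrite addrK.
Qed.

Definition pbit_code (x : R) : 'I_(2 ^ p) :=
  odflt (Ordinal pow2_gt0) [pick j | pbit_val j == x].

Lemma pbit_codeK (x : R) : pbit_val (pbit_code (rnd p x)) = rnd p x.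
Proof.
rewrite /pbit_code; case: pickP => [j /eqP //|no_code].
by have [j /eqP] := rnd_pbit_val x; rewrite no_code.
Qed.

Lemma pbit_code_inj (x y : R) :
  pbit_code (rnd p x) = pbit_code (rnd p y) -> rnd p x = rnd p y.
Proof. by move=> exy; rewrite -pbit_codeK exy pbit_codeK. Qed.

Lemma rnd_small (x : R) : 0 <= x -> x * 2 ^+ p./2 < 2^-1 -> rnd p x = 0.
Proof.
move=> x_ge0 x_small; rewrite /rnd.
have -> : Num.floor (x * 2 ^+ p./2 + 2^-1 : R) = 0.
  apply: floor_def; rewrite add0r /=; apply/andP; split.
    have : 0 <= x * 2 ^+ p./2 by rewrite mulr_ge0 ?exprn_ge0.
    by rewrite -[0%:~R]/(0 : R); lra.
  by rewrite -[1%:~R]/(1 : R); lra.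
by rewrite min_r ?max_r ?mul0r //; lia.
Qed.

Lemma rnd0 : rnd p (0 : R) = 0.
Proof. by apply: rnd_small; rewrite ?mul0r ?invr_gt0. Qed.

Lemma rndm0 m k : rndm p (0 : 'M[R]_(m, k)) = 0.
Proof. by apply/matrixP => i j; rewrite !mxE rnd0. Qed.

Lemma ler_rnd : {homo @rnd R p : x y / x <= y}.
Proof.
move=> x y lexy; rewrite /rnd ler_pM2r ?invr_gt0 ?exprn_gt0 // ler_int.
apply: le_max2 => //; apply: le_min2 => //; apply: le_floor.
by rewrite lerD2r ler_pM2r ?exprn_gt0.
Qed.

End PbitValues.

Section SmallIntegers.
Variables (R : realType) (f B : nat).
Hypothesis B_small : (B * 2 ^ f < 2 ^ (f.*2).-1)%N.

Definition small_int (x : R) := exists m : int, x = m%:~R /\ (absz m <= B)%N.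

Lemma rnd_small_int x : small_int x -> rnd f.*2 x = x.
Proof.
case=> m [-> m_le]; rewrite /rnd doubleK.
have pow_gt0 : (0 < 2 ^ f)%N by rewrite expn_gt0.
have pow_int : (2 : R) ^+ f = ((2 ^ f)%N%:Z)%:~R by rewrite -pmulrn natrX.
have -> : Num.floor (m%:~R * 2 ^+ f + 2^-1 : R) = m * (2 ^ f)%N%:Z.
  apply: floor_def; rewrite pow_int -intrM intrD; apply/andP; split.
    by rewrite lerDl; lra.
  by rewrite ltrD2l; lra.
have /andP[lo hi] : (- ((2 ^ (f.*2).-1 - 1)%N%:Z) <= m * (2 ^ f)%N%:Z)
                    && (m * (2 ^ f)%N%:Z <= (2 ^ (f.*2).-1 - 1)%N%:Z).
  by move: (2 ^ f)%N (2 ^ (f.*2).-1)%N B_small pow_gt0 => X Y; nia.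
rewrite min_r // max_r // intrM -pow_int mulfK //.
by rewrite expf_neq0 // pnatr_eq0.
Qed.

Lemma small_int_nat k : (k <= B)%N -> small_int k%:R.
Proof. by move=> k_le; exists k%:Z. Qed.

Lemma small_intN x : small_int x -> small_int (- x).
Proof. by case=> m [-> m_le]; exists (- m); rewrite mulrNz abszN. Qed.

End SmallIntegers.

(** * Linear attention remembers only its running sums *)

Section ApplyLayer.
Variables (R : realType) (p d H : nat).
Variable head : 'I_H -> seq 'rV[R]_d -> 'rV[R]_d.
Variable mlp : 'rV[R]_d -> ('I_H -> 'rV[R]_d) -> 'rV[R]_d.

Lemma size_apply_layer xs : size (apply_layer p head mlp xs) = size xs.
Proof. exact: size_mkseq. Qed.

Lemma apply_layer_cat a b :
  apply_layer p head mlp (a ++ b) = apply_layer p head mlp a ++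
    mkseq (fun i => rndm p (mlp (nth 0 b i) (fun h => head h (a ++ take i.+1 b))))
          (size b).
Proof.
rewrite /apply_layer /mkseq size_cat iotaD map_cat add0n; congr (_ ++ _).
  apply/eq_in_map => i; rewrite mem_iota /= => i_lt.
  rewrite nth_cat i_lt take_cat; case: ltnP => // i_ge.
  by rewrite (_ : i.+1 - size a = 0)%N ?take0 ?cats0 ?take_oversize //; lia.
rewrite -{1}[size a]addn0 iotaDl -map_comp; apply: eq_map => i /=.
rewrite nth_cat take_cat ltnNge leq_addr /= ltnNge (leq_trans (leq_addr i _)) //=.
by rewrite addKn subSn ?leq_addr // addKn.
Qed.

Lemma apply_layer_cat_congr a1 a2 b :
    (forall h c, c != [::] -> head h (a1 ++ c) = head h (a2 ++ c)) ->
  exists2 b', apply_layer p head mlp (a1 ++ b) = apply_layer p head mlp a1 ++ b'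
            & apply_layer p head mlp (a2 ++ b) = apply_layer p head mlp a2 ++ b'.
Proof.
move=> same_heads; rewrite !apply_layer_cat; eexists; first by [].
congr (_ ++ _); case: b => // y b; apply: eq_mkseq => i; congr (rndm p (mlp _ _)).
by apply: boolp.funext => h; rewrite same_heads.
Qed.

End ApplyLayer.

Lemma log2fact_le (R : realType) n N : (n`! <= 2 ^ N)%N -> log2fact R n <= N%:R.
Proof.
move=> fact_le; have ln2_gt0 : 0 < ln (2 : R) by rewrite ln_gt0 // ltr1n.
rewrite /log2fact ler_pdivrMr // mulr_natl -lnXn // -natrX.
by rewrite ler_ln ?posrE ?ltr0n ?fact_gt0 ?expn_gt0 // ler_nat.
Qed.

Section LinearMemory.
Variables (R : realType) (p d H : nat).
Implicit Types (l : lin_layer R d H) (ls : seq (lin_layer R d H)) (a b : seq 'rV[R]_d).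

Definition lin_key l h (y : 'rV[R]_d) := rndm p (lphi l h (rndm p (y *m lK l h))).
Definition lin_val l h (y : 'rV[R]_d) := rndm p (y *m lV l h).

Definition lin_S l h a :=
  foldl (fun (S : 'M[R]_d) y => rndm p (S + (lin_key l h y)^T *m lin_val l h y)) 0 a.
Definition lin_z l h a :=
  foldl (fun (z : 'rV[R]_d) y => rndm p (z + lin_key l h y)) 0 a.

Local Notation lin_head_of l h := (lin_head p (lQ l h) (lK l h) (lV l h) (lphi l h)).
Local Notation lin_apply l := (apply_layer p (fun h => lin_head_of l h) (lmlp l)).

Lemma lin_head_cat l h a1 a2 b :
    lin_S l h a1 = lin_S l h a2 -> lin_z l h a1 = lin_z l h a2 -> b != [::] ->
  lin_head_of l h (a1 ++ b) = lin_head_of l h (a2 ++ b).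
Proof.
move=> eq_S eq_z; case: b => // y b _.
rewrite /lin_head !foldl_cat !last_cat.
by move: eq_S eq_z; rewrite /lin_S /lin_z /lin_key /lin_val => -> ->.
Qed.

Local Notation code :=
  ({ffun 'I_H * 'I_d * 'I_d -> 'I_(2 ^ p)} * {ffun 'I_H * 'I_d -> 'I_(2 ^ p)})%type.

Definition mem_code l a : code :=
  ([ffun x => pbit_code p (lin_S l x.1.1 a x.1.2 x.2)],
   [ffun x => pbit_code p (lin_z l x.1 a 0 x.2)]).

Lemma lin_S_rndm l h a : exists W, lin_S l h a = rndm p W.
Proof.
case/lastP: a => [|a y]; first by exists 0; rewrite rndm0.
by rewrite /lin_S foldl_rcons; eexists.
Qed.

Lemma lin_z_rndm l h a : exists w, lin_z l h a = rndm p w.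
Proof.
case/lastP: a => [|a y]; first by exists 0; rewrite rndm0.
by rewrite /lin_z foldl_rcons; eexists.
Qed.

Lemma mem_code_inj l a1 a2 : mem_code l a1 = mem_code l a2 ->
  forall h, lin_S l h a1 = lin_S l h a2 /\ lin_z l h a1 = lin_z l h a2.
Proof.
case=> /ffunP eq_S /ffunP eq_z h; split.
  have [W1 eW1] := lin_S_rndm l h a1; have [W2 eW2] := lin_S_rndm l h a2.
  apply/matrixP => i j; have := eq_S (h, i, j).
  by rewrite !ffunE /= eW1 eW2 !mxE => /pbit_code_inj.
have [w1 ew1] := lin_z_rndm l h a1; have [w2 ew2] := lin_z_rndm l h a2.
apply/rowP => j; have := eq_z (h, j).
by rewrite !ffunE /= ew1 ew2 !mxE => /pbit_code_inj.
Qed.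

Fixpoint mem_codes ls a : seq code :=
  if ls is l :: ls' then mem_code l a :: mem_codes ls' (lin_apply l a) else [::].

Lemma size_mem_codes ls a : size (mem_codes ls a) = size ls.
Proof. by elim: ls a => //= l ls IH a; rewrite IH. Qed.

Lemma size_run_lin ls a : size (run_lin p ls a) = size a.
Proof. by elim: ls a => //= l ls IH a; rewrite IH size_apply_layer. Qed.

Lemma run_lin_cat_drop ls a1 a2 b :
    size a1 = size a2 -> mem_codes ls a1 = mem_codes ls a2 ->
  drop (size a1) (run_lin p ls (a1 ++ b)) = drop (size a2) (run_lin p ls (a2 ++ b)).
Proof.
elim: ls a1 a2 b => [|l ls IH] a1 a2 b size12 /=; first by rewrite !drop_size_cat.
move=> /eqP; rewrite eqseq_cons => /andP[/eqP/mem_code_inj same_mem /eqP same_codes].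
have [b' -> ->] : exists2 b', lin_apply l (a1 ++ b) = lin_apply l a1 ++ b'
                           & lin_apply l (a2 ++ b) = lin_apply l a2 ++ b'.
  apply: apply_layer_cat_congr => h c c_ne.
  by have [eq_S eq_z] := same_mem h; apply: lin_head_cat.
by move: (IH (lin_apply l a1) (lin_apply l a2) b'); rewrite !size_apply_layer; apply.
Qed.

Lemma nth_run_lin_cat ls a1 a2 b i :
    size a1 = size a2 -> mem_codes ls a1 = mem_codes ls a2 ->
  nth 0 (run_lin p ls (a1 ++ b)) (size a1 + i)%N =
  nth 0 (run_lin p ls (a2 ++ b)) (size a2 + i)%N.
Proof.
by move=> size12 same_codes; rewrite -!nth_drop (run_lin_cat_drop b size12 same_codes).
Qed.

Lemma last_run_lin_cat ls a1 a2 b :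
    size a1 = size a2 -> mem_codes ls a1 = mem_codes ls a2 -> b != [::] ->
  last 0 (run_lin p ls (a1 ++ b)) = last 0 (run_lin p ls (a2 ++ b)).
Proof.
move=> size12 same_codes; rewrite -size_eq0 -lt0n => b_gt0.
have pred_add m : ((m + size b).-1 = m + (size b).-1)%N by rewrite -!subn1 addnBA.
rewrite -!nth_last !size_run_lin !size_cat !pred_add.
exact: nth_run_lin_cat.
Qed.

Lemma card_le_mem_codes (I : finType) ls (A : I -> seq 'rV[R]_d) :
    injective (fun i => mem_codes ls (A i)) ->
  (#|I| <= 2 ^ (size ls * H * d * (d + 1) * p))%N.
Proof.
move=> codes_inj.
pose f i : (size ls).-tuple code := Tuple (introT eqP (size_mem_codes ls (A i))).
have /leq_card : injective f by move=> i j /(congr1 val); exact: codes_inj.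
rewrite card_tuple card_prod !card_ffun !card_prod !card_ord -!expnM -expnD -expnM.
by congr (_ <= 2 ^ _)%N; ring.
Qed.

Lemma log2fact_le_mem_codes n ls (A : {perm 'I_n} -> seq 'rV[R]_d) :
    injective (fun s => mem_codes ls (A s)) ->
  log2fact R n <= (size ls * H * d * (d + 1) * p)%N%:R.
Proof. by move/card_le_mem_codes; rewrite card_Sn => /log2fact_le. Qed.

End LinearMemory.

Section Embedding.
Variables (R : realType) (p d : nat) (T : Type).
Implicit Type emb : nat -> T -> 'rV[R]_d.

Lemma size_embed emb u : size (embed p emb u) = size u.
Proof. by rewrite size_map size_zip size_iota minnn. Qed.

Lemma nth_embed emb x0 u j :
  (j < size u)%N -> nth 0 (embed p emb u) j = rndm p (emb j (nth x0 u j)).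
Proof.
move=> j_lt; rewrite (nth_map (0%N, x0)) ?size_zip ?size_iota ?minnn //.
by rewrite nth_zip ?size_iota //= nth_iota.
Qed.

Lemma embed_cat emb u v :
  embed p emb (u ++ v) = embed p emb u ++ embed p (fun j => emb (size u + j)%N) v.
Proof.
case: u => [|x0 u] //.
apply: (@eq_from_nth _ 0); first by rewrite size_cat !size_embed /= size_cat.
move=> j; rewrite size_embed => j_lt.
rewrite (nth_embed _ x0) // !nth_cat size_embed.
case: ltnP => [j_lt_u|j_ge_u]; first by rewrite (nth_embed _ x0).
by rewrite (nth_embed _ x0) ?subnKC //; move: j_lt; rewrite size_cat; lia.
Qed.

End Embedding.

Lemma size_percom_half n (s : {perm 'I_n}) : size [seq s i | i <- enum 'I_n] = n.
Proof. by rewrite size_map size_enum_ord. Qed.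

Lemma size_percom_input n (s t : {perm 'I_n}) : size (percom_input s t) = (n + n)%N.
Proof. by rewrite /percom_input size_cat !size_percom_half. Qed.

Lemma nth_percom_input_l n (s t : {perm 'I_n}) (j : 'I_n) x0 :
  nth x0 (percom_input s t) j = s j.
Proof.
rewrite /percom_input nth_cat size_percom_half ltn_ord.
by rewrite (@nth_map _ j _ x0) ?size_enum_ord // nth_ord_enum.
Qed.

Lemma nth_percom_input_r n (s t : {perm 'I_n}) (j : 'I_n) x0 :
  nth x0 (percom_input s t) (n + j)%N = t j.
Proof.
rewrite /percom_input nth_cat size_percom_half ltnNge leq_addr /= addKn.
by rewrite (@nth_map _ j _ x0) ?size_enum_ord // nth_ord_enum.
Qed.

Section LowerBound.
Variables (R : realType) (p n d H : nat) (ls : seq (lin_layer R d H)).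

Lemma lin_solves_mem_codes_inj (emb : nat -> 'I_n -> 'rV[R]_d) out :
    lin_solves p ls emb out ->
  injective (fun s : {perm 'I_n} => mem_codes p ls (embed p emb [seq s i | i <- enum 'I_n])).
Proof.
move=> solves s1 s2 same_codes; apply/permP => i.
have := solves s1 1%g i; have := solves s2 1%g i.
rewrite /percom_input !embed_cat !size_percom_half !perm1.
set tau_part := embed _ _ [seq (1%g : {perm 'I_n}) j | j <- enum 'I_n].
have := nth_run_lin_cat tau_part i _ same_codes.
by rewrite !size_embed !size_percom_half => -> // -> ->.
Qed.

Lemma lin_cot_cat_mem_codes (Voc : finType) (emb : nat -> Voc -> 'rV[R]_d) next
    (u1 u2 v : seq Voc) T :
    size u1 = size u2 -> v != [::] ->
    mem_codes p ls (embed p emb u1) = mem_codes p ls (embed p emb u2) ->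
  lin_cot p ls emb next (u1 ++ v) T = lin_cot p ls emb next (u2 ++ v) T.
Proof.
move=> size12 v_ne same_codes.
pose step ts := rcons ts (next (last 0 (run_lin p ls (embed p emb ts)))).
have same_next w : w != [::] -> last 0 (run_lin p ls (embed p emb (u1 ++ w))) =
                                last 0 (run_lin p ls (embed p emb (u2 ++ w))).
  move=> w_ne; rewrite !embed_cat size12.
  by apply: last_run_lin_cat; rewrite ?size_embed // -size_eq0 size_embed size_eq0.
have common_suffix k : exists w, [/\ iter k step (u1 ++ v) = u1 ++ w,
                                     iter k step (u2 ++ v) = u2 ++ w & w != [::]].
  elim: k => [|k [w [e1 e2 w_ne]]]; first by exists v.
  exists (rcons w (next (last 0 (run_lin p ls (embed p emb (u2 ++ w)))))).
  by rewrite /= e1 e2 /step !rcons_cat same_next // -size_eq0 size_rcons.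
have [w [e1 e2 _]] := common_suffix T.
by rewrite /lin_cot e1 e2 !size_cat ![(_ + size v)%N]addnC -!drop_drop !drop_size_cat.
Qed.

Lemma lin_cot_solves_mem_codes_inj (Voc : finType) (inp : 'I_n -> Voc)
    (emb : nat -> Voc -> 'rV[R]_d) next ans T :
    (forall (s t : {perm 'I_n}) i,
       ans (lin_cot p ls emb next (map inp (percom_input s t)) T) i = s (t i)) ->
  injective (fun s : {perm 'I_n} =>
               mem_codes p ls (embed p emb (map inp [seq s i | i <- enum 'I_n]))).
Proof.
move=> solves s1 s2 same_codes; apply/permP => i.
have := solves s1 1%g i; have := solves s2 1%g i; rewrite /percom_input !map_cat !perm1.
have tau_ne : map inp [seq (1%g : {perm 'I_n}) j | j <- enum 'I_n] != [::].
  by rewrite -size_eq0 size_map size_percom_half -lt0n (leq_ltn_trans _ (ltn_ord i)).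
by rewrite (lin_cot_cat_mem_codes next _ _ tau_ne same_codes) ?size_map ?size_percom_half
  // => -> ->.
Qed.

End LowerBound.

(** * A one-layer softmax transformer for PerCom *)

Lemma foldl_fix (T : eqType) (A : Type) (F : A -> T -> A) a s :
  {in s, forall y, F a y = a} -> foldl F a s = a.
Proof.
elim: s => //= y s IH Fa_fix; rewrite Fa_fix ?mem_head // IH // => z z_s.
by rewrite Fa_fix // in_cons z_s orbT.
Qed.

Section SoftmaxOneHot.
Variables (R : realType) (p d : nat).

Lemma onehot_average (w : 'rV[R]_d -> R) (v : 'rV[R]_d -> 'rV[R]_d) xs1 y xs2 :
    {in xs1 ++ xs2, forall z, w z = 0} -> w y = 1 ->
    rnd p (1 : R) = 1 -> rndm p (v y) = v y ->
  map_mx (fun a => rnd p (a / foldl (fun a z => rnd p (a + w z)) 0 (xs1 ++ y :: xs2)))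
         (foldl (fun a z => rndm p (a + w z *: v z)) 0 (xs1 ++ y :: xs2)) = v y.
Proof.
move=> w0 w1 rnd1 vy_fix.
have w0_1 z : z \in xs1 -> w z = 0 by move=> z1; rewrite w0 // mem_cat z1.
have w0_2 z : z \in xs2 -> w z = 0 by move=> z2; rewrite w0 // mem_cat z2 orbT.
rewrite !foldl_cat /= !(@foldl_fix _ _ _ 0 xs1) => [|z /w0_1->|z /w0_1->];
  rewrite ?scale0r ?addr0 ?rndm0 ?rnd0 //.
rewrite w1 !add0r scale1r rnd1 vy_fix.
rewrite !foldl_fix => [|z /w0_2->|z /w0_2->]; rewrite ?scale0r ?addr0 ?rnd1 ?vy_fix //.
by apply/rowP => j; rewrite !mxE divr1 -[in RHS]vy_fix mxE.
Qed.

Definition soft_weight (Q K : 'M[R]_d) (x y : 'rV[R]_d) : R :=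
  rnd p (expR (rnd p ((rndm p (x *m Q) *m (rndm p (y *m K))^T) ord0 ord0))).

Lemma soft_head_onehot Q K V x (xs1 : seq 'rV[R]_d) y xs2 :
    last 0 (xs1 ++ y :: xs2) = x ->
    {in xs1 ++ xs2, forall z, soft_weight Q K x z = 0} -> soft_weight Q K x y = 1 ->
    rnd p (1 : R) = 1 -> rndm p (rndm p (y *m V)) = rndm p (y *m V) ->
  soft_head p Q K V (xs1 ++ y :: xs2) = rndm p (y *m V).
Proof.
move=> last_x; rewrite /soft_head last_x.
exact: (onehot_average (w := soft_weight Q K x) (v := fun z => rndm p (z *m V))).
Qed.

End SoftmaxOneHot.

Section PercomSoftmax.
Variables (R : realType) (m f : nat).
Local Notation n := m.+1.
Local Notation p := f.*2.
Local Notation beta := (f + 2)%N.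
Local Notation B := (2 * beta * n ^ 2)%N.
Hypothesis B_small : (B * 2 ^ f < 2 ^ p.-1)%N.

Definition vec4 (a b c e : R) : 'rV[R]_4 := \row_(k < 4) nth 0 [:: a; b; c; e] k.

Lemma rndm_vec4 a b c e :
    small_int B a -> small_int B b -> small_int B c -> small_int B e ->
  rndm p (vec4 a b c e) = vec4 a b c e.
Proof.
move=> ha hb hc he; apply/rowP => k; rewrite !mxE.
by case: k => [[|[|[|[|k]]]] k_lt] //=; apply: (rnd_small_int B_small).
Qed.

Lemma oppr_vec4 a b c e : - vec4 a b c e = vec4 (- a) (- b) (- c) (- e).
Proof.
by apply/rowP => k; rewrite !mxE; case: k => [[|[|[|[|k]]]] k_lt] //=; rewrite oppr0.
Qed.

Lemma vec4_dot a b c e a' b' c' e' :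
  (vec4 a b c e *m (vec4 a' b' c' e')^T) ord0 ord0 = a * a' + b * b' + c * c' + e * e'.
Proof. by rewrite !mxE !big_ord_recr big_ord0 /= !mxE /= add0r. Qed.

(* Keys [j < n] carry [(j+1, (j+1)^2, 1, sigma j)] and the query at [n + i]
   carries [(-2 beta (t+1), beta, beta (t+1)^2, 0)] with [t = tau i]. With
   [Q = 1] and [K = -1] the query scores [- beta (j - t)^2] on key [j], and any
   two query-side vectors score at most [- beta]. *)
Definition percom_emb (j : nat) (tok : 'I_n) : 'rV[R]_4 :=
  if (j < n)%N then vec4 j.+1%:R (j.+1 ^ 2)%N%:R 1 tok%:R
  else vec4 (- (2 * beta * tok.+1)%N%:R) beta%:R (beta * tok.+1 ^ 2)%N%:R 0.

Lemma percom_emb_pbit j tok :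
  rndm p (percom_emb j tok) = percom_emb j tok /\
  rndm p (- percom_emb j tok) = - percom_emb j tok.
Proof.
have tok_lt := ltn_ord tok; have n2_gt0 : (0 < n ^ 2)%N by rewrite expn_gt0.
have small1 : small_int B (1 : R) by exists 1; split => //; nia.
have small0 : small_int B (0 : R) by exists 0.
rewrite /percom_emb; case: ifP => j_lt.
  have small_j : small_int B (j.+1%:R : R) by apply: small_int_nat; nia.
  have small_j2 : small_int B ((j.+1 ^ 2)%N%:R : R) by apply: small_int_nat; nia.
  have small_tok : small_int B (tok%:R : R) by apply: small_int_nat; nia.
  by rewrite oppr_vec4; split; apply: rndm_vec4 => //; apply: small_intN.
have small_a : small_int B ((2 * beta * tok.+1)%N%:R : R) by apply: small_int_nat; nia.
have small_b : small_int B (beta%:R : R) by apply: small_int_nat; nia.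
have small_c : small_int B ((beta * tok.+1 ^ 2)%N%:R : R) by apply: small_int_nat; nia.
by rewrite oppr_vec4 opprK oppr0; split; apply: rndm_vec4 => //; apply: small_intN.
Qed.

Lemma rnd_expR_rnd0 : rnd p (expR (rnd p (0 : R))) = 1.
Proof.
have small1 : small_int B (1 : R) by exists 1; split => //; nia.
by rewrite rnd0 expR0 (rnd_small_int B_small).
Qed.

(* [beta = f + 2] makes [expR (- beta) * 2 ^ f < 1/2], so such weights round to [0]. *)
Lemma rnd_expR_rnd_le (s : R) : s <= - beta%:R -> rnd p (expR (rnd p s)) = 0.
Proof.
move=> s_le.
have small_beta : small_int B (- (beta%:R : R)) by apply/small_intN/small_int_nat; nia.
have rnd_s_le : rnd p s <= - beta%:R.
  by rewrite -(rnd_small_int B_small small_beta) ler_rnd.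
apply: rnd_small; first exact: expR_ge0.
rewrite doubleK.
set a := expR (rnd p s); set E := expR (beta%:R : R).
have a_ge0 : 0 <= a by apply: expR_ge0.
have E_gt0 : 0 < E by apply: expR_gt0.
have aE_le1 : a * E <= 1.
  have a_le : a <= E^-1 by rewrite -expRN ler_expR.
  by rewrite -(mulVf (lt0r_neq0 E_gt0)) ler_wpM2r // ltW.
have pow_gt0 : 0 < (2 : R) ^+ f by apply: exprn_gt0.
have E_ge : (2 : R) ^+ f * 4 <= E.
  have e_ge2 : (2 : R) <= expR 1 by have := expR_ge1Dx (1 : R); lra.
  have le_pow k : (2 : R) ^+ k <= expR 1 ^+ k.
    by apply: lerXn2r; rewrite ?nnegrE ?expR_ge0 //; lra.
  rewrite /E -[beta%:R]mulr1 expRM_natl exprD (_ : 4 = 2 ^+ 2); last by rewrite expr2; lra.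
  by apply: ler_pM; rewrite ?exprn_ge0 ?le_pow //; lra.
nra.
Qed.

Lemma percom_score_self (i : nat) (tq tok : 'I_n) :
  (percom_emb (n + i)%N tq *m (- percom_emb tq tok)^T) ord0 ord0 = 0.
Proof. by rewrite /percom_emb ltnNge leq_addr ltn_ord /= oppr_vec4 vec4_dot !natrM; ring. Qed.

Lemma percom_score_le (i j : nat) (tq tok : 'I_n) : j != tq ->
  (percom_emb (n + i)%N tq *m (- percom_emb j tok)^T) ord0 ord0 <= - beta%:R.
Proof.
move=> j_ne; rewrite /percom_emb ltnNge leq_addr /=.
case: ifP => j_lt; rewrite oppr_vec4 vec4_dot.
  have sq_ge1 : 1 <= (j.+1%:R - tq.+1%:R : R) ^+ 2.
    by apply: sqr_intr_ge1; rewrite ?rpredB ?rpred_nat // subr_eq0 eqr_nat eqSS.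
  have beta_ge0 : 0 <= beta%:R :> R by [].
  rewrite !natrM; nra.
rewrite opprK mul0r addr0 mulrN mulNr mulrN -!natrM -!opprD -!natrD lerN2 ler_nat.
nia.
Qed.

Lemma percom_weight (i j : nat) (tq tok : 'I_n) :
  soft_weight p 1%:M (- 1%:M) (percom_emb (n + i)%N tq) (percom_emb j tok)
  = if j == tq then 1 else 0.
Proof.
have [q_fix _] := percom_emb_pbit (n + i)%N tq; have [_ k_fix] := percom_emb_pbit j tok.
rewrite /soft_weight mulmx1 mulmxN mulmx1 q_fix k_fix.
have [->|j_ne] := eqVneq j tq; first by rewrite percom_score_self rnd_expR_rnd0.
apply: rnd_expR_rnd_le; exact: percom_score_le.
Qed.

Lemma soft_head_percom (s t : {perm 'I_n}) (i : 'I_n) :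
  soft_head p 1%:M (- 1%:M) 1%:M (take (n + i)%N.+1 (embed p percom_emb (percom_input s t)))
  = percom_emb (t i) (s (t i)).
Proof.
set toks := percom_input s t; pose x j := percom_emb j (nth ord0 toks j).
have embed_toks : embed p percom_emb toks = map x (iota 0 (n + n)).
  apply: (@eq_from_nth _ 0) => [|j];
    rewrite size_embed size_percom_input ?size_map ?size_iota //.
  move=> j_lt; rewrite (nth_embed _ _ ord0) ?size_percom_input // (nth_map 0%N) ?size_iota //.
  by rewrite nth_iota // (proj1 (percom_emb_pbit _ _)).
have k_le : (t i <= n + i)%N by rewrite (leq_trans (ltnW (ltn_ord _))) ?leq_addr.
have split_iota :
    (iota 0 (n + i).+1 = iota 0 (t i) ++ (t i : nat) :: iota (t i).+1 (n + i - t i))%N.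
  by rewrite -[in LHS](subnKC k_le) -addnS iotaD add0n.
rewrite embed_toks -map_take take_iota (minn_idPl _); last by rewrite ltn_add2l.
have last_x : last 0 (map x (iota 0 (n + i)%N.+1)) = percom_emb (n + i)%N (t i).
  by rewrite -nth_last size_map size_iota (nth_map 0%N) ?size_iota // nth_iota //
     /x nth_percom_input_r.
rewrite split_iota map_cat /= in last_x *.
have x_pbit j : rndm p (x j) = x j by have [] := percom_emb_pbit j (nth ord0 toks j).
rewrite (soft_head_onehot last_x).
- by rewrite mulmx1 x_pbit /x nth_percom_input_l.
- move=> z; rewrite -map_cat => /mapP[j]; rewrite mem_cat !mem_iota /= => j_ne ->.
  rewrite percom_weight ifF //; apply/negbTE; move: j_ne; rewrite neq_ltn; lia.
- by rewrite percom_weight eqxx.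
- by apply: (rnd_small_int B_small); exists 1; split => //; nia.
- by rewrite mulmx1 !x_pbit.
Qed.

Definition percom_layer : soft_layer R 4 1 :=
  SoftLayer (fun _ => 1%:M) (fun _ => - 1%:M) (fun _ => 1%:M) (fun _ heads => heads ord0).

Definition percom_out (v : 'rV[R]_4) : 'I_n := inord (Num.truncn (v ord0 ord_max)).

Lemma percom_layer_solves : soft_solves p [:: percom_layer] percom_emb percom_out.
Proof.
move=> s t i; rewrite /run_soft /= /apply_layer nth_mkseq; last first.
  by rewrite size_embed size_percom_input ltn_add2l.
rewrite /= soft_head_percom (proj1 (percom_emb_pbit _ _)).
by rewrite /percom_out /percom_emb ltn_ord !mxE /= natrK inord_val.
Qed.

Lemma percom_layer_pbit : all_soft_pbit p [:: percom_layer].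
Proof.
have small01 (b : bool) : small_int B (b%:R : R) by apply: small_int_nat; case: b => /=; nia.
have rnd01 (b : bool) : rnd p (b%:R : R) = b%:R by apply: (rnd_small_int B_small).
have rnd01N (b : bool) : rnd p (- b%:R : R) = - b%:R.
  by apply: (rnd_small_int B_small); apply: small_intN.
by split => // h; split => i j; rewrite /= !mxE ?rnd01 ?rnd01N.
Qed.

End PercomSoftmax.

Definition percom_frac_bits n := (4 * trunc_log 2 n + 8)%N.

Lemma percom_frac_bits_ok n : (0 < n)%N ->
  (2 * (percom_frac_bits n + 2) * n ^ 2 * 2 ^ percom_frac_bits n
     < 2 ^ (percom_frac_bits n).*2.-1)%N.
Proof.
move=> n_gt0; set f := percom_frac_bits n; set l := trunc_log 2 n.
have n_lt : (n < 2 ^ l.+1)%N by apply: trunc_log_ltn.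
have l_lt : (2 * l < 2 ^ (2 * l))%N by apply: ltn_expl.
have -> : (2 ^ f.*2.-1 = 2 ^ (2 * l) * 2 ^ 5 * (2 ^ l.+1) ^ 2 * 2 ^ f)%N.
  by rewrite -!expnM -!expnD; congr (2 ^ _)%N; rewrite /f /percom_frac_bits -!muln2; lia.
rewrite ltn_pmul2r ?expn_gt0 // /f /percom_frac_bits.
move: (2 ^ (2 * l))%N (2 ^ l.+1)%N n_lt l_lt => A Y n_lt l_lt.
have n2_lt : (n ^ 2 < Y ^ 2)%N by rewrite ltn_sqr.
have : (0 < n ^ 2)%N by rewrite expn_gt0 n_gt0.
nia.
Qed.

Lemma percom_size_le (R : realType) n : (2 <= n)%N ->
  ((4 * (percom_frac_bits n).*2)%N%:R : R) <= 128 / ln 2 * ln (n%:R : R).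
Proof.
move=> n_ge2; set l := trunc_log 2 n.
have ln2_gt0 : 0 < ln (2 : R) by rewrite ln_gt0 // ltr1n.
have pow_le : (2 ^ l <= n)%N by apply: trunc_logP => //; lia.
have l_ln2_le : l%:R * ln (2 : R) <= ln (n%:R : R).
  rewrite mulr_natl -lnXn // ler_ln ?posrE ?exprn_gt0 ?ltr0n //; last by lia.
  by rewrite -natrX ler_nat.
have ln2_le : ln (2 : R) <= ln (n%:R : R) by rewrite ler_ln ?posrE ?ltr0n ?ler_nat //; lia.
rewrite (_ : (4 * (percom_frac_bits n).*2 = 32 * l + 64)%N); last first.
  by rewrite /percom_frac_bits -/l -muln2; lia.
rewrite natrD natrM mulrAC ler_pdivlMr //.
have : 0 <= l%:R * ln (2 : R) by rewrite mulr_ge0 ?ler0n // ltW.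
nra.
Qed.

Lemma soft_percom_polylog (R : realType) :
  exists (c : R) (k N : nat), forall n : nat, (N <= n)%N ->
     exists (H d p : nat) (layers : seq (soft_layer R d H))
            (emb : nat -> 'I_n -> 'rV[R]_d) (out : 'rV[R]_d -> 'I_n),
       [/\ size layers = 1%N,
           all_soft_pbit p layers,
           (H * d * p)%N%:R <= c * (ln (n%:R : R)) ^+ k
         & soft_solves p layers emb out].
Proof.
exists (128 / ln 2), 1%N, 2%N => -[//|m] m_ge1.
have prec_ok := percom_frac_bits_ok (ltn0Sn m).
exists 1%N, 4%N, (percom_frac_bits m.+1).*2, [:: percom_layer R].
exists (@percom_emb R m (percom_frac_bits m.+1)), (@percom_out R m); split => //.
- exact: percom_layer_pbit prec_ok.
- by rewrite mul1n expr1 percom_size_le.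
- exact: percom_layer_solves prec_ok.
Qed.

Theorem theoremA6 :
  (* (1) lower bound for L-layer linear attention *)
  (forall (R : realType) (n L H d p : nat),
     ((L * H * d * (d + 1) * p)%N%:R < log2fact R n) ->
     forall (layers : seq (lin_layer R d H)) (emb : nat -> 'I_n -> 'rV[R]_d)
            (out : 'rV[R]_d -> 'I_n),
       size layers = L ->
       all_lin_pbit p layers ->
       ~ lin_solves p layers emb out)
  /\
  (* (2) a one-layer full attention Transformer solves PerCom with
         H d p = O(poly log n) *)
  (forall R : realType, exists (c : R) (k N : nat), forall n : nat, (N <= n)%N ->
     exists (H d p : nat) (layers : seq (soft_layer R d H))
            (emb : nat -> 'I_n -> 'rV[R]_d) (out : 'rV[R]_d -> 'I_n),
       [/\ size layers = 1%N,
           all_soft_pbit p layers,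
           (H * d * p)%N%:R <= c * (ln (n%:R : R)) ^+ k
         & soft_solves p layers emb out])
  /\
  (* (3) the same lower bound for linear attention with chain of thought,
         for any number T of generated tokens and any way of reading the
         answer from the generated tokens *)
  (forall (R : realType) (n L H d p T : nat) (Voc : finType),
     ((L * H * d * (d + 1) * p)%N%:R < log2fact R n) ->
     forall (layers : seq (lin_layer R d H)) (inp : 'I_n -> Voc)
            (emb : nat -> Voc -> 'rV[R]_d) (next : 'rV[R]_d -> Voc)
            (ans : seq Voc -> 'I_n -> 'I_n),
       size layers = L ->
       all_lin_pbit p layers ->
       ~ (forall (s t : {perm 'I_n}) (i : 'I_n),
            ans (lin_cot p layers emb next (map inp (percom_input s t)) T) i
            = s (t i))).
Proof.
split; [|split].
- move=> R n L H d p gt_log ls emb out size_ls _.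
  move/lin_solves_mem_codes_inj/log2fact_le_mem_codes.
  by rewrite size_ls leNgt gt_log.
- exact: soft_percom_polylog.
- move=> R n L H d p T Voc gt_log ls inp emb next ans size_ls _.
  move/lin_cot_solves_mem_codes_inj/log2fact_le_mem_codes.
  by rewrite size_ls leNgt gt_log.
Qed.
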